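(* Let $a>0$ and let $L_2=a\mathbb{Z}^3\cup a(\mathbb{Z}+\tfrac12)^3\cup W$. The Voronoi cell of the origin with respect to $L_2$ is the tetrakis hexahedron $$\operatorname{conv}\Big(\{(\pm\tfrac{5a}{24},\pm\tfrac{5a}{24},\pm\tfrac{5a}{24})\}\cup\{(\pm\tfrac{5a}{16},0,0),(0,\pm\tfrac{5a}{16},0),(0,0,\pm\tfrac{5a}{16})\}\Big).$$ This is the cube $[-5a/24,5a/24]^3$ with a square pyramid of height $5a/48$ glued onto each of its six faces. Its volume is $$V^{(2)}_\Gamma=\frac{125}{1152}a^3 .$$ The same holds, after translation, for the Voronoi cell of every point of $a\mathbb{Z}^3\cup a(\mathbb{Z}+\tfrac12)^3$ with respect to $L_2$.
   Context: Fix $a>0$. $W\subset\mathbb{R}^3$ is the set of all points $a(u_1,u_2,u_3)$ such that $(u_1,u_2,u_3)$ is a permutation of a triple $(i,\ j+\tfrac12,\ k+\varepsilon)$ with $i,j,k\in\mathbb{Z}$ and $\varepsilon\in\{\tfrac14,\tfrac34\}$. For a discrete set $P\subset\mathbb{R}^3$ and $p\in P$, the Voronoi cell of $p$ with respect to $P$ is $\{x\in\mathbb{R}^3: |x-p|\le|x-q|\ \text{for all } q\in P\}$. *)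

From Stdlib Require Import Reals Lra Lia ZArith List Permutation Classical ClassicalEpsilon.
Open Scope R_scope.
Import ListNotations.

Definition pt := (R * R * R)%type.
Definition mkpt (x y z : R) : pt := (x, y, z).
Definition px (p : pt) : R := fst (fst p).
Definition py (p : pt) : R := snd (fst p).
Definition pz (p : pt) : R := snd p.

Definition padd (p q : pt) : pt := mkpt (px p + px q) (py p + py q) (pz p + pz q).
Definition psub (p q : pt) : pt := mkpt (px p - px q) (py p - py q) (pz p - pz q).
Definition pscale (c : R) (p : pt) : pt := mkpt (c * px p) (c * py p) (c * pz p).
Definition origin : pt := mkpt 0 0 0.

Definition norm3 (p : pt) : R := sqrt (px p ^ 2 + py p ^ 2 + pz p ^ 2).

Definition inZ3 (a : R) (p : pt) : Prop :=
  exists i j k : Z, p = mkpt (a * IZR i) (a * IZR j) (a * IZR k).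

Definition inZh3 (a : R) (p : pt) : Prop :=
  exists i j k : Z, p = mkpt (a * (IZR i + 1/2)) (a * (IZR j + 1/2)) (a * (IZR k + 1/2)).

Definition inW (a : R) (p : pt) : Prop :=
  exists (i j k : Z) (eps u1 u2 u3 : R),
    (eps = 1/4 \/ eps = 3/4) /\
    Permutation [u1; u2; u3] [IZR i; IZR j + 1/2; IZR k + eps] /\
    p = mkpt (a * u1) (a * u2) (a * u3).

Definition L2 (a : R) (p : pt) : Prop := inZ3 a p \/ inZh3 a p \/ inW a p.

Definition voronoi (P : pt -> Prop) (p : pt) (x : pt) : Prop :=
  forall q, P q -> norm3 (psub x p) <= norm3 (psub x q).

Fixpoint sumR (l : list R) : R := match l with [] => 0 | r :: t => r + sumR t end.

Definition conv (l : list pt) (x : pt) : Prop :=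
  exists w : list R,
    length w = length l /\ Forall (fun t => 0 <= t) w /\ sumR w = 1 /\
    x = mkpt (sumR (map (fun '(t, v) => t * px v) (combine w l)))
             (sumR (map (fun '(t, v) => t * py v) (combine w l)))
             (sumR (map (fun '(t, v) => t * pz v) (combine w l))).

Definition cube_verts (c : R) : list pt :=
  [mkpt c c c; mkpt c c (-c); mkpt c (-c) c; mkpt c (-c) (-c);
   mkpt (-c) c c; mkpt (-c) c (-c); mkpt (-c) (-c) c; mkpt (-c) (-c) (-c)].
Definition octa_verts (d : R) : list pt :=
  [mkpt d 0 0; mkpt (-d) 0 0; mkpt 0 d 0; mkpt 0 (-d) 0; mkpt 0 0 d; mkpt 0 0 (-d)].
Definition tetrakis (a : R) : list pt := cube_verts (5*a/24) ++ octa_verts (5*a/16).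

Definition in_cube (c : R) (x : pt) : Prop :=
  -c <= px x <= c /\ -c <= py x <= c /\ -c <= pz x <= c.

Definition pyramids (c h : R) : list (list pt) :=
  [ [mkpt c c c; mkpt c c (-c); mkpt c (-c) c; mkpt c (-c) (-c); mkpt (c+h) 0 0];
    [mkpt (-c) c c; mkpt (-c) c (-c); mkpt (-c) (-c) c; mkpt (-c) (-c) (-c); mkpt (-(c+h)) 0 0];
    [mkpt c c c; mkpt c c (-c); mkpt (-c) c c; mkpt (-c) c (-c); mkpt 0 (c+h) 0];
    [mkpt c (-c) c; mkpt c (-c) (-c); mkpt (-c) (-c) c; mkpt (-c) (-c) (-c); mkpt 0 (-(c+h)) 0];
    [mkpt c c c; mkpt c (-c) c; mkpt (-c) c c; mkpt (-c) (-c) c; mkpt 0 0 (c+h)];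
    [mkpt c c (-c); mkpt c (-c) (-c); mkpt (-c) c (-c); mkpt (-c) (-c) (-c); mkpt 0 0 (-(c+h))] ].

Definition indic (P : Prop) : R := if excluded_middle_informative P then 1 else 0.

Definition zrange (m : nat) : list Z :=
  map (fun k => (Z.of_nat k - Z.of_nat m)%Z) (seq 0 (2 * m + 1)).

(* (1/N^3) * #{ (i,j,k) in Z^3, |i|,|j|,|k| <= N^2 : (i/N, j/N, k/N) in S }, N = n+1.
   The box radius N^2/N = N eventually contains any bounded set. *)
Definition lattice_vol (S : pt -> Prop) (n : nat) : R :=
  let N := Datatypes.S n in
  let m := (N * N)%nat in
  / (INR N ^ 3) *
  sumR (map (fun i => sumR (map (fun j => sumR (map (fun k =>
     indic (S (mkpt (IZR i / INR N) (IZR j / INR N) (IZR k / INR N))))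
     (zrange m))) (zrange m))) (zrange m)).

Definition has_volume (S : pt -> Prop) (v : R) : Prop := Un_cv (lattice_vol S) v.

(* Per-coordinate lower bounds
      on (x_i - a u_i)^2 - x_i^2 show that the pair bounds make the origin a
      nearest point of L2; conversely the 24 nearest points of W give back the
      bisector inequalities.
   4. Translations by aZ^3 and a(Z+1/2)^3 permute the coordinate types, so L2
      is invariant under them and every such cell is a translate of T.
   5. The volume: the lattice count of T at resolution N splits into the cube
      (a cube of a one-dimensional count) and six congruent pyramids (summed
      slice by slice and compared with a cubic primitive by telescoping); it
      equals (125/1152) a^3 N^3 up to O(N^2). *)

From Stdlib Require Import Reals Lra Lia ZArith List Permutation ClassicalEpsilon.
Open Scope R_scope.
Import ListNotations.

Lemma pt_eq (p q : pt) : px p = px q -> py p = py q -> pz p = pz q -> p = q.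
Proof.
  destruct p as [[x y] z], q as [[x' y'] z']; unfold px, py, pz; simpl.
  intros -> -> ->; reflexivity.
Qed.

Definition dot (u v : pt) : R := px u * px v + py u * py v + pz u * pz v.

Ltac ptsimpl := unfold origin, padd, psub, pscale, dot, mkpt, px, py, pz in *; cbn [fst snd] in *.

(* Proves [In v l] for an explicit list whose entries equal [v] only up to
   real arithmetic. *)
Ltac in_list := simpl;
  repeat first [ left; apply pt_eq; ptsimpl; lra | right ].

(* [cone l s x]: x is a nonnegative combination of the points of l with total
   weight s; [conv l] is the case s = 1 (definitionally). *)
Definition cone (l : list pt) (s : R) (x : pt) : Prop :=
  exists w : list R,
    length w = length l /\ Forall (fun t => 0 <= t) w /\ sumR w = s /\
    x = mkpt (sumR (map (fun '(t, v) => t * px v) (combine w l)))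
             (sumR (map (fun '(t, v) => t * py v) (combine w l)))
             (sumR (map (fun '(t, v) => t * pz v) (combine w l))).

Lemma cone_nil s x : cone [] s x -> s = 0 /\ x = origin.
Proof.
  intros [[|t w] [Hl [_ [Hs ->]]]]; simpl in *; [split; auto | discriminate].
Qed.

Lemma cone_cons v l s x : cone (v :: l) s x ->
  exists t x', 0 <= t /\ cone l (s - t) x' /\ x = padd (pscale t v) x'.
Proof.
  intros [[|t w] [Hl [Hf [Hs ->]]]]; simpl in Hl; try discriminate.
  inversion Hf; subst.
  eexists t, _; split; [assumption | split].
  - exists w; repeat split; auto; simpl; lra.
  - apply pt_eq; ptsimpl; reflexivity.
Qed.

Lemma cone_zero l : cone l 0 origin.
Proof.
  exists (repeat 0 (length l)); rewrite repeat_length; repeat split; auto.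
  - apply Forall_forall; intros t Ht; apply repeat_spec in Ht; lra.
  - induction l; simpl; auto; rewrite IHl; lra.
  - apply pt_eq; ptsimpl; induction l; simpl; auto; rewrite <- IHl; ring.
Qed.

Lemma cone_add l s s' x y : cone l s x -> cone l s' y -> cone l (s + s') (padd x y).
Proof.
  intros [w [Hl [Hf [Hs Hx]]]] [w' [Hl' [Hf' [Hs' Hy]]]]; subst.
  exists (map (fun '(t, t') => t + t') (combine w w')).
  revert w w' Hl Hf Hl' Hf'.
  induction l as [|v l IH]; intros [|t w] [|t' w'] Hl Hf Hl' Hf'; simpl in *; try discriminate.
  - repeat split; auto; [lra | apply pt_eq; ptsimpl; lra].
  - inversion Hf; inversion Hf'; subst.
    destruct (IH w w') as [K1 [K2 [K3 K4]]]; auto.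
    pose proof (f_equal px K4); pose proof (f_equal py K4); pose proof (f_equal pz K4).
    repeat split; [simpl; lia | constructor; auto; lra | simpl; lra | apply pt_eq; ptsimpl; lra].
Qed.

Lemma cone_scale l s x t : 0 <= t -> cone l s x -> cone l (t * s) (pscale t x).
Proof.
  intros Ht [w [Hl [Hf [Hs Hx]]]]; subst.
  exists (map (fun u => t * u) w).
  revert w Hl Hf.
  induction l as [|v l IH]; intros [|u w] Hl Hf; simpl in *; try discriminate.
  - repeat split; auto; [lra | apply pt_eq; ptsimpl; lra].
  - inversion Hf; subst.
    destruct (IH w) as [K1 [K2 [K3 K4]]]; auto.
    pose proof (f_equal px K4); pose proof (f_equal py K4); pose proof (f_equal pz K4).
    repeat split; [simpl; lia | constructor; auto; apply Rmult_le_pos; auto |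
                   simpl; rewrite K3; ring | apply pt_eq; ptsimpl; nra].
Qed.

Lemma cone_vert l v t : In v l -> 0 <= t -> cone l t (pscale t v).
Proof.
  intros Hv Ht; induction l as [|u l IH]; [contradiction|].
  destruct Hv as [<-|Hv].
  - destruct (cone_zero l) as [w [Hl [Hf [Hs Hx]]]].
    exists (t :: w); repeat split; simpl; [auto | constructor; auto | lra |].
    pose proof (f_equal px Hx); pose proof (f_equal py Hx); pose proof (f_equal pz Hx).
    apply pt_eq; ptsimpl; lra.
  - destruct (IH Hv) as [w [Hl [Hf [Hs Hx]]]].
    exists (0 :: w); repeat split; simpl; [auto | constructor; auto; lra | lra |].
    pose proof (f_equal px Hx); pose proof (f_equal py Hx); pose proof (f_equal pz Hx).
    apply pt_eq; ptsimpl; lra.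
Qed.

Lemma conv_vert l v : In v l -> conv l v.
Proof.
  intros Hv; pose proof (cone_vert l v 1 Hv ltac:(lra)) as H.
  replace v with (pscale 1 v) by (apply pt_eq; ptsimpl; ring); exact H.
Qed.

Lemma conv_eq l x y : conv l x -> x = y -> conv l y.
Proof. now intros H <-. Qed.

Lemma conv_seg l p q t : conv l p -> conv l q -> 0 <= t <= 1 ->
  conv l (padd (pscale t p) (pscale (1 - t) q)).
Proof.
  intros Hp Hq Ht.
  pose proof (cone_add _ _ _ _ _ (cone_scale _ _ _ t ltac:(lra) Hp)
                                 (cone_scale _ _ _ (1 - t) ltac:(lra) Hq)) as H.
  replace (t * 1 + (1 - t) * 1) with 1 in H by ring; exact H.
Qed.

Lemma cone_incl l m s x : incl l m -> cone l s x -> cone m s x.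
Proof.
  revert s x; induction l as [|v l IH]; intros s x Hlm H.
  - apply cone_nil in H as [-> ->]; apply cone_zero.
  - apply cone_cons in H as [t [x' [Ht [Hc ->]]]].
    replace s with (t + (s - t)) by ring.
    apply cone_add; [apply cone_vert; auto; apply Hlm; left; auto|].
    apply IH; auto; intros u Hu; apply Hlm; right; auto.
Qed.

Lemma conv_incl l m x : incl l m -> conv l x -> conv m x.
Proof. apply cone_incl. Qed.

Lemma cone_dot_le l s x w b : cone l s x ->
  (forall v, In v l -> dot w v <= b) -> dot w x <= b * s.
Proof.
  revert s x; induction l as [|v l IH]; intros s x H Hv.
  - apply cone_nil in H as [-> ->]; ptsimpl; lra.
  - apply cone_cons in H as [t [x' [Ht [Hc ->]]]].
    specialize (IH _ _ Hc (fun u Hu => Hv u (or_intror Hu))).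
    specialize (Hv v (or_introl eq_refl)).
    ptsimpl; nra.
Qed.

Lemma conv_dot_le l x w b : conv l x ->
  (forall v, In v l -> dot w v <= b) -> dot w x <= b.
Proof. intros H Hv; pose proof (cone_dot_le l 1 x w b H Hv); lra. Qed.

Lemma conv_square l B U V al be :
  conv l (padd B (padd U V)) -> conv l (padd B (psub U V)) ->
  conv l (psub B (psub U V)) -> conv l (psub B (padd U V)) ->
  -1 <= al <= 1 -> -1 <= be <= 1 ->
  conv l (padd B (padd (pscale al U) (pscale be V))).
Proof.
  intros Hpp Hpm Hmp Hmm Hal Hbe.
  assert (Hup := conv_seg l _ _ ((1 + al) / 2) Hpp Hmp ltac:(split; lra)).
  assert (Hdn := conv_seg l _ _ ((1 + al) / 2) Hpm Hmm ltac:(split; lra)).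
  eapply conv_eq; [exact (conv_seg l _ _ ((1 + be) / 2) Hup Hdn ltac:(split; lra))|].
  apply pt_eq; ptsimpl; field.
Qed.

Lemma conv_pyramid l A B U V m s t :
  conv l (padd B (padd U V)) -> conv l (padd B (psub U V)) ->
  conv l (psub B (psub U V)) -> conv l (psub B (padd U V)) -> conv l A ->
  0 <= m <= 1 -> -(1 - m) <= s <= 1 - m -> -(1 - m) <= t <= 1 - m ->
  conv l (padd (pscale m A) (padd (pscale (1 - m) B) (padd (pscale s U) (pscale t V)))).
Proof.
  intros Hpp Hpm Hmp Hmm HA Hm Hs Ht.
  destruct (Req_dec m 1) as [->|Hm1].
  - replace s with 0 by lra; replace t with 0 by lra.
    eapply conv_eq; [exact HA | apply pt_eq; ptsimpl; ring].
  - assert (Hk : 0 < / (1 - m)) by (apply Rinv_0_lt_compat; lra).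
    assert (Hk1 : (1 - m) * / (1 - m) = 1) by (field; lra).
    assert (Hsq := conv_square l B U V (s * / (1 - m)) (t * / (1 - m)) Hpp Hpm Hmp Hmm
                     ltac:(split; nra) ltac:(split; nra)).
    eapply conv_eq; [exact (conv_seg l _ _ m HA Hsq Hm)|].
    apply pt_eq; ptsimpl; field; lra.
Qed.


Ltac abs_cases := unfold Rabs in *;
  repeat match goal with
         | |- context [Rcase_abs ?t] => destruct (Rcase_abs t)
         | H : context [Rcase_abs ?t] |- _ => destruct (Rcase_abs t)
         end.

Definition arrangements (u v w : R) : list pt :=
  [mkpt u v w; mkpt u w v; mkpt v u w; mkpt v w u; mkpt w u v; mkpt w v u].

(* The 24 points (0, +-1/2, +-1/4) up to order; scaled by a, they are the points
   of W nearest to the origin, all at distance a sqrt(5/16). *)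
Definition facet_normals : list pt :=
  flat_map (fun s => flat_map (fun t => arrangements 0 (s / 2) (t / 4)) [1; -1]) [1; -1].

(* Intersection of the half-spaces of points at least as close to the origin as
   to a w (w a facet normal): |x|^2 <= |x - a w|^2 iff w.x <= a |w|^2 / 2. *)
Definition in_cell (a : R) (x : pt) : Prop :=
  forall w, In w facet_normals -> dot w x <= 5 * a / 32.

Definition pair_bounds (a : R) (x : pt) : Prop :=
  2 * Rabs (px x) + Rabs (py x) <= 5 * a / 8 /\ 2 * Rabs (px x) + Rabs (pz x) <= 5 * a / 8 /\
  2 * Rabs (py x) + Rabs (px x) <= 5 * a / 8 /\ 2 * Rabs (py x) + Rabs (pz x) <= 5 * a / 8 /\
  2 * Rabs (pz x) + Rabs (px x) <= 5 * a / 8 /\ 2 * Rabs (pz x) + Rabs (py x) <= 5 * a / 8.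

Lemma facet_normal_in s t w : (s = 1 \/ s = -1) -> (t = 1 \/ t = -1) ->
  In w (arrangements 0 (s / 2) (t / 4)) -> In w facet_normals.
Proof.
  intros Hs Ht Hw; unfold facet_normals; cbn [flat_map]; rewrite !in_app_iff.
  destruct Hs as [->| ->], Ht as [->| ->]; tauto.
Qed.

(* The tetrakis hexahedron satisfies the 24 facet inequalities: it suffices to
   check them on its 14 vertices. *)
Lemma tetrakis_in_cell a x : 0 < a -> conv (tetrakis a) x -> in_cell a x.
Proof.
  intros ha Hx w Hw; apply (conv_dot_le _ _ _ _ Hx); intros v Hv.
  simpl in Hw, Hv;
  repeat match goal with H : _ \/ _ |- _ => destruct H as [<-|H] end;
  try contradiction; ptsimpl; lra.
Qed.

Lemma abs_pair_of x y D :
  (forall s t, (s = 1 \/ s = -1) -> (t = 1 \/ t = -1) -> 2 * s * x + t * y <= D) ->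
  2 * Rabs x + Rabs y <= D.
Proof.
  intros H.
  pose proof (H 1 1); pose proof (H 1 (-1)); pose proof (H (-1) 1); pose proof (H (-1) (-1)).
  abs_cases; lra.
Qed.

(* Each pair bound collects four of the facet inequalities. *)
Lemma cell_pair_bounds a x : in_cell a x -> pair_bounds a x.
Proof.
  intros Hx; destruct x as [[x1 x2] x3].
  assert (N : forall s t w, (s = 1 \/ s = -1) -> (t = 1 \/ t = -1) ->
            In w (arrangements 0 (s / 2) (t / 4)) -> dot w (mkpt x1 x2 x3) <= 5 * a / 32)
    by (intros s t w Hs Ht Hw; exact (Hx w (facet_normal_in s t w Hs Ht Hw))).
  unfold pair_bounds; repeat split; apply abs_pair_of; intros s t Hs Ht.
  - pose proof (N s t (mkpt (s / 2) (t / 4) 0) Hs Ht ltac:(simpl; tauto)); ptsimpl; lra.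
  - pose proof (N s t (mkpt (s / 2) 0 (t / 4)) Hs Ht ltac:(simpl; tauto)); ptsimpl; lra.
  - pose proof (N s t (mkpt (t / 4) (s / 2) 0) Hs Ht ltac:(simpl; tauto)); ptsimpl; lra.
  - pose proof (N s t (mkpt 0 (s / 2) (t / 4)) Hs Ht ltac:(simpl; tauto)); ptsimpl; lra.
  - pose proof (N s t (mkpt (t / 4) 0 (s / 2)) Hs Ht ltac:(simpl; tauto)); ptsimpl; lra.
  - pose proof (N s t (mkpt 0 (t / 4) (s / 2)) Hs Ht ltac:(simpl; tauto)); ptsimpl; lra.
Qed.

Lemma ratio_bounds r c : 0 < c -> -c <= r <= c -> -1 <= r / c <= 1.
Proof.
  intros hc hr; unfold Rdiv.
  assert (0 < / c) by (apply Rinv_0_lt_compat; lra).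
  assert (c * / c = 1) by (field; lra).
  split; nra.
Qed.

(* The cube [-c, c]^3, c = 5a/24, lies in the tetrakis hexahedron: it is swept
   by segments between its top and bottom faces. *)
Lemma cube_in_tetrakis a x : 0 < a -> in_cube (5 * a / 24) x -> conv (tetrakis a) x.
Proof.
  intros ha Hx; set (c := 5 * a / 24); assert (hc : 0 < c) by (unfold c; lra).
  destruct x as [[x1 x2] x3]; destruct Hx as [Hx1 [Hx2 Hx3]]; ptsimpl; fold c in Hx1, Hx2, Hx3.
  assert (Face : forall z, z = c \/ z = -c ->
            conv (tetrakis a)
              (padd (mkpt 0 0 z) (padd (pscale (x1 / c) (mkpt c 0 0)) (pscale (x2 / c) (mkpt 0 c 0))))).
  { intros z Hz; apply conv_square; try (apply ratio_bounds; lra);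
      apply conv_vert; unfold c in *; destruct Hz as [->| ->]; in_list. }
  eapply conv_eq.
  - apply (conv_seg _ _ _ ((1 + x3 / c) / 2) (Face c (or_introl eq_refl))
             (Face (-c) (or_intror eq_refl))).
    pose proof (ratio_bounds x3 c hc Hx3); lra.
  - apply pt_eq; ptsimpl; field; lra.
Qed.

Lemma conv_axis_pyramid l e f g h xi eta zeta : 0 < h ->
  conv l (padd (pscale (2 * h) e) (padd (pscale (2 * h) f) (pscale (2 * h) g))) ->
  conv l (padd (pscale (2 * h) e) (psub (pscale (2 * h) f) (pscale (2 * h) g))) ->
  conv l (psub (pscale (2 * h) e) (psub (pscale (2 * h) f) (pscale (2 * h) g))) ->
  conv l (psub (pscale (2 * h) e) (padd (pscale (2 * h) f) (pscale (2 * h) g))) ->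
  conv l (pscale (3 * h) e) ->
  2 * h <= xi <= 3 * h -> Rabs eta <= 2 * (3 * h - xi) -> Rabs zeta <= 2 * (3 * h - xi) ->
  conv l (padd (pscale xi e) (padd (pscale eta f) (pscale zeta g))).
Proof.
  intros hh Hpp Hpm Hmp Hmm HA Hxi Heta Hzeta.
  assert (Hk : 0 < / h) by (apply Rinv_0_lt_compat; lra).
  assert (Hk1 : h * / h = 1) by (field; lra).
  pose proof (Rabs_pos eta); pose proof (Rabs_pos zeta).
  assert (Rabs eta * / h <= 2 * (3 * h - xi) * / h) by (apply Rmult_le_compat_r; lra).
  assert (Rabs zeta * / h <= 2 * (3 * h - xi) * / h) by (apply Rmult_le_compat_r; lra).
  eapply conv_eq.
  - apply (conv_pyramid l (pscale (3 * h) e) (pscale (2 * h) e) (pscale (2 * h) f)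
             (pscale (2 * h) g) ((xi - 2 * h) * / h) (eta * / h / 2) (zeta * / h / 2));
      try assumption; [split; nra | ..]; abs_cases; split; nra.
  - apply pt_eq; ptsimpl; field; lra.
Qed.

Lemma pyramid_incl_tetrakis a F :
  In F (pyramids (5 * a / 24) (5 * a / 48)) -> incl F (tetrakis a).
Proof.
  intros HF v Hv; simpl in HF;
  repeat match goal with H : _ \/ _ |- _ => destruct H as [<-|H] end; try contradiction;
  simpl in Hv;
  repeat match goal with H : _ \/ _ |- _ => destruct H as [<-|H] end; try contradiction;
  unfold tetrakis, cube_verts, octa_verts; in_list.
Qed.

Local Ltac pyramid_case a hh k e f g xi eta zeta :=
  right; exists (nth k (pyramids (5 * a / 24) (5 * a / 48)) []);
  split; [apply nth_In; simpl; lia|];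
  eapply conv_eq;
  [ apply (conv_axis_pyramid _ e f g _ xi eta zeta hh);
    [ apply conv_vert; in_list .. | abs_cases; lra | abs_cases; lra | abs_cases; lra ]
  | apply pt_eq; ptsimpl; ring ].

Lemma pair_bounds_split a x : 0 < a -> pair_bounds a x ->
  in_cube (5 * a / 24) x \/
  exists F, In F (pyramids (5 * a / 24) (5 * a / 48)) /\ conv F x.
Proof.
  intros ha Hx; destruct x as [[x1 x2] x3]; unfold pair_bounds, px, py, pz in Hx; simpl in Hx.
  assert (hh : 0 < 5 * a / 48) by lra.
  destruct (Rle_dec (Rabs x1) (5 * a / 24)) as [A1|A1];
  [destruct (Rle_dec (Rabs x2) (5 * a / 24)) as [A2|A2];
   [destruct (Rle_dec (Rabs x3) (5 * a / 24)) as [A3|A3]|]|].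
  - left; unfold in_cube; ptsimpl; abs_cases; lra.
  - destruct (Rle_dec 0 x3).
    + pyramid_case a hh 4%nat (mkpt 0 0 1) (mkpt 1 0 0) (mkpt 0 1 0) x3 x1 x2.
    + pyramid_case a hh 5%nat (mkpt 0 0 (-1)) (mkpt 1 0 0) (mkpt 0 1 0) (-x3) x1 x2.
  - destruct (Rle_dec 0 x2).
    + pyramid_case a hh 2%nat (mkpt 0 1 0) (mkpt 1 0 0) (mkpt 0 0 1) x2 x1 x3.
    + pyramid_case a hh 3%nat (mkpt 0 (-1) 0) (mkpt 1 0 0) (mkpt 0 0 1) (-x2) x1 x3.
  - destruct (Rle_dec 0 x1).
    + pyramid_case a hh 0%nat (mkpt 1 0 0) (mkpt 0 1 0) (mkpt 0 0 1) x1 x2 x3.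
    + pyramid_case a hh 1%nat (mkpt (-1) 0 0) (mkpt 0 1 0) (mkpt 0 0 1) (-x1) x2 x3.
Qed.

Lemma cube_pyramids_in_tetrakis a x : 0 < a ->
  in_cube (5 * a / 24) x \/ (exists F, In F (pyramids (5 * a / 24) (5 * a / 48)) /\ conv F x) ->
  conv (tetrakis a) x.
Proof.
  intros ha [C|[F [HF P]]].
  - apply cube_in_tetrakis; assumption.
  - exact (conv_incl _ _ _ (pyramid_incl_tetrakis a F HF) P).
Qed.

Lemma tetrakis_pair_bounds a x : 0 < a -> conv (tetrakis a) x <-> pair_bounds a x.
Proof.
  intros ha; split.
  - intros H; apply cell_pair_bounds, tetrakis_in_cell; assumption.
  - intros H; apply cube_pyramids_in_tetrakis, pair_bounds_split; assumption.
Qed.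

Lemma tetrakis_cube_pyramids a x : 0 < a ->
  conv (tetrakis a) x <->
  in_cube (5 * a / 24) x \/ exists F, In F (pyramids (5 * a / 24) (5 * a / 48)) /\ conv F x.
Proof.
  intros ha; split.
  - intros H; apply pair_bounds_split, tetrakis_pair_bounds; assumption.
  - apply cube_pyramids_in_tetrakis; exact ha.
Qed.

Definition Zpt (t : R) : Prop := exists i : Z, t = IZR i.
Definition Hpt (t : R) : Prop := exists j : Z, t = IZR j + 1 / 2.
Definition Qpt (t : R) : Prop :=
  exists (k : Z) (eps : R), (eps = 1 / 4 \/ eps = 3 / 4) /\ t = IZR k + eps.

Definition arr3 {T : Type} (u1 u2 u3 A B C : T) : Prop :=
  (u1 = A /\ u2 = B /\ u3 = C) \/ (u1 = A /\ u2 = C /\ u3 = B) \/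
  (u1 = B /\ u2 = A /\ u3 = C) \/ (u1 = B /\ u2 = C /\ u3 = A) \/
  (u1 = C /\ u2 = A /\ u3 = B) \/ (u1 = C /\ u2 = B /\ u3 = A).

Definition typed3 (P Q S : R -> Prop) (u1 u2 u3 : R) : Prop :=
  (P u1 /\ Q u2 /\ S u3) \/ (P u1 /\ S u2 /\ Q u3) \/
  (Q u1 /\ P u2 /\ S u3) \/ (Q u1 /\ S u2 /\ P u3) \/
  (S u1 /\ P u2 /\ Q u3) \/ (S u1 /\ Q u2 /\ P u3).

Lemma perm3_arr3 {T : Type} (u1 u2 u3 A B C : T) :
  Permutation [u1; u2; u3] [A; B; C] <-> arr3 u1 u2 u3 A B C.
Proof.
  split.
  - intros P.
    assert (Hin : In u1 [A; B; C]) by (eapply Permutation_in; [exact P | left; auto]).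
    unfold arr3; destruct Hin as [->|[->|[->|[]]]].
    + apply Permutation_cons_inv, Permutation_length_2_inv in P.
      destruct P as [P|P]; inversion P; subst; tauto.
    + assert (P' : Permutation [u1; u2; u3] [u1; A; C])
        by (eapply perm_trans; [exact P | apply perm_swap]).
      apply Permutation_cons_inv, Permutation_sym, Permutation_length_2_inv in P'.
      destruct P' as [P'|P']; inversion P'; subst; tauto.
    + assert (P' : Permutation [u1; u2; u3] [u1; A; B]).
      { eapply perm_trans; [exact P|].
        eapply perm_trans; [apply perm_skip, perm_swap | apply perm_swap]. }
      apply Permutation_cons_inv, Permutation_sym, Permutation_length_2_inv in P'.
      destruct P' as [P'|P']; inversion P'; subst; tauto.
  - unfold arr3.
    intros [[-> [-> ->]]|[[-> [-> ->]]|[[-> [-> ->]]|[[-> [-> ->]]|[[-> [-> ->]]|[-> [-> ->]]]]]]].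
    + apply Permutation_refl.
    + apply perm_skip, perm_swap.
    + apply perm_swap.
    + eapply perm_trans; [apply perm_skip, perm_swap | apply perm_swap].
    + eapply perm_trans; [apply perm_swap | apply perm_skip, perm_swap].
    + eapply perm_trans; [apply perm_swap|].
      eapply perm_trans; [apply perm_skip, perm_swap | apply perm_swap].
Qed.

Lemma typed3_iff P Q S u1 u2 u3 :
  typed3 P Q S u1 u2 u3 <-> exists A B C, P A /\ Q B /\ S C /\ arr3 u1 u2 u3 A B C.
Proof.
  unfold typed3, arr3; split.
  - intros [[? [? ?]]|[[? [? ?]]|[[? [? ?]]|[[? [? ?]]|[[? [? ?]]|[? [? ?]]]]]]];
      [exists u1, u2, u3 | exists u1, u3, u2 | exists u2, u1, u3
      | exists u3, u1, u2 | exists u2, u3, u1 | exists u3, u2, u1]; tauto.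
  - intros [A [B [C [HA [HB [HC H]]]]]].
    destruct H as [[-> [-> ->]]|[[-> [-> ->]]|[[-> [-> ->]]|[[-> [-> ->]]|[[-> [-> ->]]|[-> [-> ->]]]]]]];
      tauto.
Qed.

Lemma inW_typed a p :
  inW a p <-> exists u1 u2 u3, p = mkpt (a * u1) (a * u2) (a * u3) /\ typed3 Zpt Hpt Qpt u1 u2 u3.
Proof.
  split.
  - intros [i [j [k [eps [u1 [u2 [u3 [He [P ->]]]]]]]]].
    exists u1, u2, u3; split; [reflexivity|].
    apply typed3_iff; exists (IZR i), (IZR j + 1 / 2), (IZR k + eps).
    split; [exists i; reflexivity|]; split; [exists j; reflexivity|].
    split; [exists k, eps; auto | apply perm3_arr3; exact P].
  - intros [u1 [u2 [u3 [-> Ht]]]].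
    apply typed3_iff in Ht as [A [B [C [[i ->] [[j ->] [[k [eps [He ->]]] Harr]]]]]].
    exists i, j, k, eps, u1, u2, u3; split; [exact He|]; split; [apply perm3_arr3; exact Harr | reflexivity].
Qed.

Definition site (u1 u2 u3 : R) : Prop :=
  (Zpt u1 /\ Zpt u2 /\ Zpt u3) \/ (Hpt u1 /\ Hpt u2 /\ Hpt u3) \/ typed3 Zpt Hpt Qpt u1 u2 u3.

Lemma L2_site a p :
  L2 a p <-> exists u1 u2 u3, p = mkpt (a * u1) (a * u2) (a * u3) /\ site u1 u2 u3.
Proof.
  unfold L2, site; rewrite inW_typed; split.
  - intros [[i [j [k ->]]]|[[i [j [k ->]]]|[u1 [u2 [u3 [-> Ht]]]]]].
    + eexists _, _, _; split; [reflexivity|]; left; repeat split; eexists; reflexivity.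
    + eexists _, _, _; split; [reflexivity|]; right; left; repeat split; eexists; reflexivity.
    + exists u1, u2, u3; auto.
  - intros [u1 [u2 [u3 [-> [[[i ->] [[j ->] [k ->]]]|[[[i ->] [[j ->] [k ->]]]|Ht]]]]]].
    + left; exists i, j, k; reflexivity.
    + right; left; exists i, j, k; reflexivity.
    + right; right; exists u1, u2, u3; auto.
Qed.

(* Gain in squared distance along one coordinate when comparing x with the site
   a u instead of the origin: (t - a u)^2 - t^2. *)
Definition gap (a t u : R) : R := a * a * (u * u) - 2 * t * (a * u).

Lemma sqrt_le_iff A B : 0 <= A -> 0 <= B -> sqrt A <= sqrt B <-> A <= B.
Proof.
  intros hA hB; split; [apply sqrt_le_0; assumption | apply sqrt_le_1_alt].
Qed.

Lemma closer_to_origin_gap a x u1 u2 u3 :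
  norm3 (psub x origin) <= norm3 (psub x (mkpt (a * u1) (a * u2) (a * u3))) <->
  0 <= gap a (px x) u1 + gap a (py x) u2 + gap a (pz x) u3.
Proof.
  destruct x as [[x1 x2] x3]; unfold norm3, gap, origin; ptsimpl.
  rewrite sqrt_le_iff by (repeat apply Rplus_le_le_0_compat; apply pow2_ge_0).
  assert ((x1 - a * u1) ^ 2 + (x2 - a * u2) ^ 2 + (x3 - a * u3) ^ 2 =
          (x1 - 0) ^ 2 + (x2 - 0) ^ 2 + (x3 - 0) ^ 2 +
          (a * a * (u1 * u1) - 2 * x1 * (a * u1) + (a * a * (u2 * u2) - 2 * x2 * (a * u2)) +
           (a * a * (u3 * u3) - 2 * x3 * (a * u3)))) by ring.
  lra.
Qed.

Lemma gap_abs a t u : 0 < a -> a * a * (Rabs u * Rabs u) - 2 * a * Rabs t * Rabs u <= gap a t u.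
Proof.
  intros ha; unfold gap.
  assert (t * u <= Rabs t * Rabs u) by (rewrite <- Rabs_mult; apply Rle_abs).
  assert (Rabs u * Rabs u = u * u) by (rewrite <- Rabs_mult; apply Rabs_right; nra).
  nra.
Qed.

Lemma gap_Zpt a t u : 0 < a -> Rabs t <= a / 2 -> Zpt u -> 0 <= gap a t u.
Proof.
  intros ha ht [n ->]; pose proof (gap_abs a t (IZR n) ha).
  pose proof (Rabs_pos t).
  destruct (Z.eq_dec n 0) as [->|Hn].
  - rewrite Rabs_R0 in *; lra.
  - assert (1 <= Rabs (IZR n)) by (rewrite <- abs_IZR; apply IZR_le; lia).
    assert (0 <= a * Rabs (IZR n) * (a - 2 * Rabs t)) by (apply Rmult_le_pos; nra).
    assert (0 <= a * a * Rabs (IZR n) * (Rabs (IZR n) - 1)) by (apply Rmult_le_pos; nra).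
    nra.
Qed.

Lemma gap_Hpt a t u : 0 < a -> Rabs t <= a / 2 -> Hpt u -> a * a / 4 - a * Rabs t <= gap a t u.
Proof.
  intros ha ht [n ->]; pose proof (gap_abs a t (IZR n + 1 / 2) ha).
  set (T := Rabs (IZR n + 1 / 2)) in *; pose proof (Rabs_pos t).
  assert (T >= 1 / 2).
  { unfold T; destruct (Z_lt_le_dec n 0) as [Hn|Hn].
    - assert (IZR n <= -1) by (apply IZR_le; lia); rewrite Rabs_left by lra; lra.
    - apply IZR_le in Hn; rewrite Rabs_right by lra; lra. }
  assert (0 <= (T - 1 / 2) * (a * a * (T + 1 / 2) - 2 * a * Rabs t)) by (apply Rmult_le_pos; nra).
  nra.
Qed.

Lemma gap_Qpt a t u : 0 < a -> Rabs t <= a / 2 -> Qpt u -> a * a / 16 - a * Rabs t / 2 <= gap a t u.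
Proof.
  intros ha ht [n [eps [He ->]]]; pose proof (gap_abs a t (IZR n + eps) ha).
  set (T := Rabs (IZR n + eps)) in *; pose proof (Rabs_pos t).
  assert (HT : T = 1 / 4 \/ T >= 3 / 4).
  { unfold T; destruct (Z_lt_le_dec n (-1)) as [Hn|Hn].
    - assert (IZR n <= -2) by (apply IZR_le; lia); rewrite Rabs_left by lra; right; lra.
    - destruct (Z.eq_dec n (-1)) as [->|Hn1]; [|destruct (Z.eq_dec n 0) as [->|Hn0]].
      + destruct He as [-> | ->]; rewrite Rabs_left by lra; [right | left]; lra.
      + destruct He as [-> | ->]; rewrite Rabs_right by lra; [left | right]; lra.
      + assert (1 <= IZR n) by (apply IZR_le; lia); rewrite Rabs_right by lra; right; lra. }
  destruct HT as [HT | HT]; [rewrite HT in *; nra|].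
  assert (0 <= (T - 3 / 4) * (a * a * (T + 3 / 4) - 2 * a * Rabs t)) by (apply Rmult_le_pos; nra).
  nra.
Qed.

Lemma pair_bounds_voronoi a x : 0 < a -> pair_bounds a x -> voronoi (L2 a) origin x.
Proof.
  intros ha Hx q Hq; apply L2_site in Hq as [u1 [u2 [u3 [-> Hs]]]].
  apply closer_to_origin_gap.
  destruct x as [[x1 x2] x3]; unfold pair_bounds, px, py, pz in *; simpl in *.
  pose proof (Rabs_pos x1); pose proof (Rabs_pos x2); pose proof (Rabs_pos x3).
  assert (B1 : Rabs x1 <= a / 2) by lra; assert (B2 : Rabs x2 <= a / 2) by lra;
  assert (B3 : Rabs x3 <= a / 2) by lra.
  unfold site, typed3 in Hs;
  repeat match goal with H : _ \/ _ |- _ => destruct H end;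
  repeat match goal with H : _ /\ _ |- _ => destruct H end;
  repeat match goal with
         | H : Zpt ?u |- context [gap a ?t ?u] =>
             match goal with B : Rabs t <= a / 2 |- _ => pose proof (gap_Zpt a t u ha B H); clear H end
         | H : Hpt ?u |- context [gap a ?t ?u] =>
             match goal with B : Rabs t <= a / 2 |- _ => pose proof (gap_Hpt a t u ha B H); clear H end
         | H : Qpt ?u |- context [gap a ?t ?u] =>
             match goal with B : Rabs t <= a / 2 |- _ => pose proof (gap_Qpt a t u ha B H); clear H end
         end; nra.
Qed.

Lemma facet_normals_spec w :
  In w facet_normals <->
  exists s t, (s = 1 \/ s = -1) /\ (t = 1 \/ t = -1) /\ In w (arrangements 0 (s / 2) (t / 4)).
Proof.
  split.
  - unfold facet_normals; cbn [flat_map]; rewrite !in_app_iff.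
    intros [[H|[H|[]]]|[[H|[H|[]]]|[]]];
      [exists 1, 1 | exists 1, (-1) | exists (-1), 1 | exists (-1), (-1)]; tauto.
  - intros (s & t & Hs & Ht & Hw); exact (facet_normal_in s t w Hs Ht Hw).
Qed.

Lemma arrangements_arr3 w A B C : In w (arrangements A B C) -> arr3 (px w) (py w) (pz w) A B C.
Proof.
  unfold arr3; simpl;
  intros [<-|[<-|[<-|[<-|[<-|[<-|[]]]]]]]; ptsimpl; tauto.
Qed.

Lemma facet_normal_site w : In w facet_normals ->
  site (px w) (py w) (pz w) /\ dot w w = 5 / 16.
Proof.
  intros Hw; apply facet_normals_spec in Hw as (s & t & Hs & Ht & Hw).
  apply arrangements_arr3 in Hw.
  assert (HZ : Zpt 0) by (exists 0%Z; reflexivity).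
  assert (HH : Hpt (s / 2)) by (destruct Hs as [->| ->]; [exists 0%Z | exists (-1)%Z]; simpl; lra).
  assert (HQ : Qpt (t / 4))
    by (destruct Ht as [->| ->]; [exists 0%Z, (1 / 4) | exists (-1)%Z, (3 / 4)]; simpl; split; lra).
  split.
  - right; right; apply typed3_iff; exists 0, (s / 2), (t / 4); auto.
  - unfold dot, arr3 in *.
    destruct Hs as [->| ->], Ht as [->| ->];
    destruct Hw as [[-> [-> ->]]|[[-> [-> ->]]|[[-> [-> ->]]|[[-> [-> ->]]|[[-> [-> ->]]|[-> [-> ->]]]]]]];
    field.
Qed.

(* Being at least as close to the origin as to the 24 nearest points of W
   already forces the facet inequalities. *)
Lemma voronoi_in_cell a x : 0 < a -> voronoi (L2 a) origin x -> in_cell a x.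
Proof.
  intros ha Hv w Hw; destruct (facet_normal_site w Hw) as [Hs Hn].
  assert (Hq : L2 a (mkpt (a * px w) (a * py w) (a * pz w)))
    by (apply L2_site; exists (px w), (py w), (pz w); auto).
  apply Hv, closer_to_origin_gap in Hq.
  unfold gap, dot in *.
  assert (Hq' : 0 <= 2 * a * (a * (px w * px w + py w * py w + pz w * pz w) / 2
                              - (px w * px x + py w * py x + pz w * pz x))) by (ring_simplify; nra).
  rewrite Hn in Hq'.
  destruct (Rle_dec (px w * px x + py w * py x + pz w * pz x) (5 * a / 32)) as [|Hgt]; [assumption|].
  assert (0 < 2 * a * (px w * px x + py w * py x + pz w * pz x - 5 * a / 32))
    by (apply Rmult_lt_0_compat; lra).
  lra.
Qed.

Theorem voronoi_origin_tetrakis a x : 0 < a -> voronoi (L2 a) origin x <-> conv (tetrakis a) x.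
Proof.
  intros ha; rewrite tetrakis_pair_bounds by exact ha; split.
  - intros H; apply cell_pair_bounds, voronoi_in_cell; assumption.
  - apply pair_bounds_voronoi; exact ha.
Qed.

Lemma Zpt_add t s : Zpt t -> Zpt s -> Zpt (t + s).
Proof. intros [i ->] [n ->]; exists (i + n)%Z; rewrite plus_IZR; ring. Qed.

Lemma Hpt_add_Z t s : Hpt t -> Zpt s -> Hpt (t + s).
Proof. intros [i ->] [n ->]; exists (i + n)%Z; rewrite plus_IZR; ring. Qed.

Lemma Qpt_add_Z t s : Qpt t -> Zpt s -> Qpt (t + s).
Proof. intros [k [e [He ->]]] [n ->]; exists (k + n)%Z, e; rewrite plus_IZR; split; [auto | ring]. Qed.

Lemma Zpt_add_H t s : Zpt t -> Hpt s -> Hpt (t + s).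
Proof. intros [i ->] [n ->]; exists (i + n)%Z; rewrite plus_IZR; ring. Qed.

Lemma Hpt_add_H t s : Hpt t -> Hpt s -> Zpt (t + s).
Proof. intros [i ->] [n ->]; exists (i + n + 1)%Z; rewrite !plus_IZR; simpl; lra. Qed.

Lemma Qpt_add_H t s : Qpt t -> Hpt s -> Qpt (t + s).
Proof.
  intros [k [e [[-> | ->] ->]]] [n ->].
  - exists (k + n)%Z, (3 / 4); rewrite plus_IZR; split; [auto | lra].
  - exists (k + n + 1)%Z, (1 / 4); rewrite !plus_IZR; simpl; split; [auto | lra].
Qed.

Lemma typed3_shift (S P Q T P' Q' T' : R -> Prop) u1 u2 u3 s1 s2 s3 :
  (forall t s, P t -> S s -> P' (t + s)) -> (forall t s, Q t -> S s -> Q' (t + s)) ->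
  (forall t s, T t -> S s -> T' (t + s)) -> S s1 -> S s2 -> S s3 ->
  typed3 P Q T u1 u2 u3 -> typed3 P' Q' T' (u1 + s1) (u2 + s2) (u3 + s3).
Proof.
  intros HP HQ HT H1 H2 H3; unfold typed3.
  intros [[? [? ?]]|[[? [? ?]]|[[? [? ?]]|[[? [? ?]]|[[? [? ?]]|[? [? ?]]]]]]];
    [left | right; left | do 2 right; left | do 3 right; left | do 4 right; left | do 5 right];
    auto.
Qed.

Lemma typed3_swap12 P Q T u1 u2 u3 : typed3 P Q T u1 u2 u3 -> typed3 Q P T u1 u2 u3.
Proof. unfold typed3; tauto. Qed.

Definition center (s1 s2 s3 : R) : Prop :=
  (Zpt s1 /\ Zpt s2 /\ Zpt s3) \/ (Hpt s1 /\ Hpt s2 /\ Hpt s3).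

Lemma center_spec a p :
  inZ3 a p \/ inZh3 a p <-> exists s1 s2 s3, p = mkpt (a * s1) (a * s2) (a * s3) /\ center s1 s2 s3.
Proof.
  unfold center; split.
  - intros [[i [j [k ->]]]|[i [j [k ->]]]]; eexists _, _, _; split; try reflexivity;
      [left | right]; repeat split; eexists; reflexivity.
  - intros [s1 [s2 [s3 [-> [[[i ->] [[j ->] [k ->]]]|[[i ->] [[j ->] [k ->]]]]]]]];
      [left | right]; exists i, j, k; reflexivity.
Qed.

Lemma center_opp s1 s2 s3 : center s1 s2 s3 -> center (- s1) (- s2) (- s3).
Proof.
  assert (HZ : forall t, Zpt t -> Zpt (- t)) by (intros t [i ->]; exists (- i)%Z; rewrite opp_IZR; ring).
  assert (HH : forall t, Hpt t -> Hpt (- t))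
    by (intros t [i ->]; exists (- i - 1)%Z; rewrite minus_IZR, opp_IZR; simpl; lra).
  unfold center; intuition.
Qed.

Lemma site_shift u1 u2 u3 s1 s2 s3 :
  site u1 u2 u3 -> center s1 s2 s3 -> site (u1 + s1) (u2 + s2) (u3 + s3).
Proof.
  unfold site; intros Hu [[Z1 [Z2 Z3]]|[H1 [H2 H3]]].
  - destruct Hu as [[? [? ?]]|[[? [? ?]]|Ht]].
    + left; auto using Zpt_add.
    + right; left; auto using Hpt_add_Z.
    + right; right; revert Ht; apply typed3_shift with (S := Zpt);
        auto using Zpt_add, Hpt_add_Z, Qpt_add_Z.
  - destruct Hu as [[? [? ?]]|[[? [? ?]]|Ht]].
    + right; left; auto using Zpt_add_H.
    + left; auto using Hpt_add_H.
    + right; right; apply typed3_swap12; revert Ht;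
        apply typed3_shift with (S := Hpt); auto using Zpt_add_H, Hpt_add_H, Qpt_add_H.
Qed.

Lemma L2_shift a p q : inZ3 a p \/ inZh3 a p -> L2 a q -> L2 a (padd q p).
Proof.
  intros Hp Hq; apply center_spec in Hp as [s1 [s2 [s3 [-> Hs]]]].
  apply L2_site in Hq as [u1 [u2 [u3 [-> Hu]]]].
  apply L2_site; exists (u1 + s1), (u2 + s2), (u3 + s3); split.
  - apply pt_eq; ptsimpl; ring.
  - apply site_shift; assumption.
Qed.

Lemma center_neg a p : inZ3 a p \/ inZh3 a p -> inZ3 a (pscale (-1) p) \/ inZh3 a (pscale (-1) p).
Proof.
  intros Hp; apply center_spec in Hp as [s1 [s2 [s3 [-> Hs]]]].
  apply center_spec; exists (- s1), (- s2), (- s3); split.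
  - apply pt_eq; ptsimpl; ring.
  - apply center_opp; assumption.
Qed.

Lemma norm3_ext p q : px p = px q -> py p = py q -> pz p = pz q -> norm3 p = norm3 q.
Proof. intros; unfold norm3; congruence. Qed.

Theorem voronoi_center_tetrakis a p : 0 < a -> inZ3 a p \/ inZh3 a p ->
  forall x : pt, voronoi (L2 a) p x <-> conv (tetrakis a) (psub x p).
Proof.
  intros ha Hp x; rewrite <- voronoi_origin_tetrakis by exact ha; split; intros H q Hq.
  - specialize (H _ (L2_shift a p q Hp Hq)).
    rewrite (norm3_ext (psub (psub x p) origin) (psub x p)) by (ptsimpl; ring).
    rewrite (norm3_ext (psub (psub x p) q) (psub x (padd q p))) by (ptsimpl; ring).
    exact H.
  - specialize (H _ (L2_shift a _ q (center_neg a p Hp) Hq)).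
    rewrite (norm3_ext (psub x p) (psub (psub x p) origin)) by (ptsimpl; ring).
    rewrite (norm3_ext (psub x q) (psub (psub x p) (padd q (pscale (-1) p)))) by (ptsimpl; ring).
    exact H.
Qed.

Lemma sumR_app l1 l2 : sumR (l1 ++ l2) = sumR l1 + sumR l2.
Proof. induction l1 as [|r l1 IH]; simpl; [ring | rewrite IH; ring]. Qed.

Lemma sumR_perm l l' : Permutation l l' -> sumR l = sumR l'.
Proof. induction 1; simpl; lra. Qed.

Lemma sum_ext {T} (f g : T -> R) l :
  (forall x, In x l -> f x = g x) -> sumR (map f l) = sumR (map g l).
Proof. intros H; f_equal; apply map_ext_in; exact H. Qed.

Lemma sum_add {T} (f g : T -> R) l :
  sumR (map (fun x => f x + g x) l) = sumR (map f l) + sumR (map g l).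
Proof. induction l as [|x l IH]; simpl; [ring | rewrite IH; ring]. Qed.

Lemma sum_scal {T} (c : R) (f : T -> R) l : sumR (map (fun x => c * f x) l) = c * sumR (map f l).
Proof. induction l as [|x l IH]; simpl; [ring | rewrite IH; ring]. Qed.

Lemma sum_le {T} (f g : T -> R) l :
  (forall x, In x l -> f x <= g x) -> sumR (map f l) <= sumR (map g l).
Proof.
  induction l as [|x l IH]; simpl; intros H; [lra|].
  pose proof (H x (or_introl eq_refl)); pose proof (IH (fun y Hy => H y (or_intror Hy))); lra.
Qed.

Lemma sum_swap {A B} (f : A -> B -> R) l1 l2 :
  sumR (map (fun i => sumR (map (fun j => f i j) l2)) l1) =
  sumR (map (fun j => sumR (map (fun i => f i j) l1)) l2).
Proof.
  induction l1 as [|x l1 IH]; simpl.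
  - induction l2 as [|y l2 IH2]; simpl; [reflexivity | rewrite <- IH2; ring].
  - rewrite IH, <- sum_add; reflexivity.
Qed.

Lemma sum_prod2 (A : R) (b c : Z -> R) l :
  sumR (map (fun j => sumR (map (fun k => A * (b j * c k)) l)) l) =
  A * (sumR (map b l) * sumR (map c l)).
Proof.
  transitivity (sumR (map (fun j => (A * sumR (map c l)) * b j) l)).
  - apply sum_ext; intros j _.
    transitivity (sumR (map (fun k => (A * b j) * c k) l)); [apply sum_ext; intros; ring|].
    rewrite sum_scal; ring.
  - rewrite sum_scal; ring.
Qed.

Lemma in_zrange m i : In i (zrange m) <-> (- Z.of_nat m <= i <= Z.of_nat m)%Z.
Proof.
  unfold zrange; rewrite in_map_iff; split.
  - intros [k [<- Hk]]; apply in_seq in Hk; lia.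
  - intros H; exists (Z.to_nat (i + Z.of_nat m)); split; [lia | apply in_seq; lia].
Qed.

Lemma zrange_nodup m : NoDup (zrange m).
Proof. apply FinFun.Injective_map_NoDup; [intros x y; lia | apply seq_NoDup]. Qed.

Lemma sum_neg (f : Z -> R) m :
  sumR (map f (zrange m)) = sumR (map (fun i => f (- i)%Z) (zrange m)).
Proof.
  rewrite <- (map_map Z.opp f); apply sumR_perm, Permutation_map, NoDup_Permutation.
  - apply zrange_nodup.
  - apply FinFun.Injective_map_NoDup; [intros x y; lia | apply zrange_nodup].
  - intros x; rewrite in_map_iff, in_zrange; split.
    + intros H; exists (- x)%Z; rewrite in_zrange; lia.
    + intros [y [<- Hy]]; rewrite in_zrange in Hy; lia.
Qed.

Lemma telescope_seq (Phi : Z -> R) m s n :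
  sumR (map (fun k => Phi (Z.of_nat k - m)%Z - Phi (Z.of_nat k - m - 1)%Z) (seq s n)) =
  Phi (Z.of_nat (s + n) - m - 1)%Z - Phi (Z.of_nat s - m - 1)%Z.
Proof.
  induction n as [|n IH].
  - simpl; rewrite Nat.add_0_r; ring.
  - rewrite seq_S, map_app, sumR_app, IH; simpl.
    replace (Z.of_nat (s + S n) - m - 1)%Z with (Z.of_nat (s + n) - m)%Z by lia; ring.
Qed.

Lemma telescope_zrange (Phi : Z -> R) M :
  sumR (map (fun i => Phi i - Phi (i - 1)%Z) (zrange M)) =
  Phi (Z.of_nat M) - Phi (- Z.of_nat M - 1)%Z.
Proof.
  unfold zrange; rewrite map_map, (telescope_seq Phi (Z.of_nat M) 0 (2 * M + 1)).
  f_equal; f_equal; lia.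
Qed.

(* Comparison of a sum supported on a window p..q of -M..M with a telescoping
   sum: the discrete analogue of bounding an integral by a primitive. *)
Lemma window_le (f G : Z -> R) p q M :
  (- Z.of_nat M <= p)%Z -> (q <= Z.of_nat M)%Z -> (p - 1 <= q)%Z ->
  (forall i, (p <= i <= q)%Z -> f i <= G i - G (i - 1)%Z) ->
  (forall i, ~ (p <= i <= q)%Z -> f i <= 0) ->
  sumR (map f (zrange M)) <= G q - G (p - 1)%Z.
Proof.
  intros H1 H2 H3 Hin Hout.
  set (Phi := fun i => G (Z.max (p - 1) (Z.min i q))).
  apply Rle_trans with (sumR (map (fun i => Phi i - Phi (i - 1)%Z) (zrange M))).
  - apply sum_le; intros i _; unfold Phi.
    destruct (Z_le_dec p i), (Z_le_dec i q); [| | | lia].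
    + replace (Z.max (p - 1) (Z.min i q)) with i by lia.
      replace (Z.max (p - 1) (Z.min (i - 1) q)) with (i - 1)%Z by lia; apply Hin; lia.
    + replace (Z.max (p - 1) (Z.min i q)) with q by lia.
      replace (Z.max (p - 1) (Z.min (i - 1) q)) with q by lia.
      pose proof (Hout i ltac:(lia)); lra.
    + replace (Z.max (p - 1) (Z.min i q)) with (p - 1)%Z by lia.
      replace (Z.max (p - 1) (Z.min (i - 1) q)) with (p - 1)%Z by lia.
      pose proof (Hout i ltac:(lia)); lra.
  - rewrite telescope_zrange; unfold Phi.
    replace (Z.max (p - 1) (Z.min (Z.of_nat M) q)) with q by lia.
    replace (Z.max (p - 1) (Z.min (- Z.of_nat M - 1) q)) with (p - 1)%Z by lia; lra.
Qed.

Lemma window_ge (f G : Z -> R) p q M :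
  (- Z.of_nat M <= p)%Z -> (q <= Z.of_nat M)%Z -> (p - 1 <= q)%Z ->
  (forall i, (p <= i <= q)%Z -> G i - G (i - 1)%Z <= f i) ->
  (forall i, ~ (p <= i <= q)%Z -> 0 <= f i) ->
  G q - G (p - 1)%Z <= sumR (map f (zrange M)).
Proof.
  intros H1 H2 H3 Hin Hout.
  pose proof (window_le (fun i => - f i) (fun i => - G i) p q M H1 H2 H3) as W.
  replace (sumR (map (fun i => - f i) (zrange M))) with (- 1 * sumR (map f (zrange M))) in W
    by (rewrite <- sum_scal; apply sum_ext; intros; ring).
  enough (- 1 * sumR (map f (zrange M)) <= - G q - - G (p - 1)%Z) by lra.
  apply W; intros i Hi; [pose proof (Hin i Hi) | pose proof (Hout i Hi)]; lra.
Qed.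

Lemma up_spec x : x < IZR (up x) /\ IZR (up x) <= x + 1.
Proof. destruct (archimed x); lra. Qed.

Lemma int_le x i : IZR i <= x <-> (i <= up x - 1)%Z.
Proof.
  destruct (up_spec x); split; intro Hi.
  - assert (i < up x)%Z by (apply lt_IZR; lra); lia.
  - apply IZR_le in Hi; rewrite minus_IZR in Hi; simpl in Hi; lra.
Qed.

Lemma int_gt x i : x < IZR i <-> (up x <= i)%Z.
Proof.
  destruct (up_spec x); split; intro Hi.
  - destruct (Z_le_dec (up x) i) as [|Hn]; [assumption|].
    assert (Hi' : (i <= up x - 1)%Z) by lia.
    apply IZR_le in Hi'; rewrite minus_IZR in Hi'; simpl in Hi'; lra.
  - apply IZR_le in Hi; lra.
Qed.

Lemma lt_div x y N : 0 < N -> (x < y / N <-> N * x < y).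
Proof.
  intros hN; replace y with (N * (y / N)) at 2 by (field; lra).
  split; intro H; [apply Rmult_lt_compat_l | apply (Rmult_lt_reg_l N)]; lra.
Qed.

Lemma le_div x y N : 0 < N -> (y / N <= x <-> y <= N * x).
Proof.
  intros hN; replace y with (N * (y / N)) at 2 by (field; lra).
  split; intro H; [apply Rmult_le_compat_l | apply (Rmult_le_reg_l N)]; lra.
Qed.

Lemma indic_iff P Q : (P <-> Q) -> indic P = indic Q.
Proof.
  intros H; unfold indic.
  destruct (excluded_middle_informative P), (excluded_middle_informative Q); tauto.
Qed.

Lemma indic_and P Q : indic (P /\ Q) = indic P * indic Q.
Proof.
  unfold indic; destruct (excluded_middle_informative P), (excluded_middle_informative Q),
    (excluded_middle_informative (P /\ Q)); try tauto; ring.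
Qed.

Lemma indic_or P Q : ~ (P /\ Q) -> indic (P \/ Q) = indic P + indic Q.
Proof.
  intros H; unfold indic; destruct (excluded_middle_informative P),
    (excluded_middle_informative Q), (excluded_middle_informative (P \/ Q)); try tauto; ring.
Qed.

Lemma indic_T (P : Prop) : P -> indic P = 1.
Proof. intros; unfold indic; destruct (excluded_middle_informative P); tauto. Qed.

Lemma indic_F (P : Prop) : ~ P -> indic P = 0.
Proof. intros; unfold indic; destruct (excluded_middle_informative P); tauto. Qed.

Definition cnt (N r : R) (M : nat) : R :=
  sumR (map (fun j => indic (- r <= IZR j / N <= r)) (zrange M)).

(* These j are the integers with |j| <= up (N r) - 1, so there are 2 up (N r) - 1
   of them when the range -M..M is wide enough. *)
Lemma cnt_val N r M : 0 < N -> 0 <= r -> N * r <= INR M ->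
  cnt N r M = 2 * IZR (up (N * r)) - 1.
Proof.
  intros hN hr hM; destruct (up_spec (N * r)) as [U1 U2].
  assert (Hw : forall j, (- r <= IZR j / N <= r) <-> (1 - up (N * r) <= j <= up (N * r) - 1)%Z).
  { intros j.
    assert (Ej : IZR (- j) / N = - (IZR j / N)) by (rewrite opp_IZR; field; lra).
    pose proof (le_div r (IZR j) N hN) as L1; pose proof (le_div r (IZR (- j)) N hN) as L2.
    pose proof (int_le (N * r) j) as I1; pose proof (int_le (N * r) (- j)) as I2.
    split.
    - intros [H1 H2].
      assert (B1 : (j <= up (N * r) - 1)%Z) by (apply I1, L1; exact H2).
      assert (B2 : (- j <= up (N * r) - 1)%Z) by (apply I2, L2; lra).
      lia.
    - intros Hj.
      assert (B1 : IZR j / N <= r) by (apply L1, I1; lia).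
      assert (B2 : IZR (- j) / N <= r) by (apply L2, I2; lia).
      lra. }
  assert (hb : (up (N * r) <= Z.of_nat M + 1)%Z)
    by (apply le_IZR; rewrite plus_IZR, <- INR_IZR_INZ; simpl; lra).
  assert (hpos : (1 <= up (N * r))%Z) by (cut (0 < up (N * r))%Z; [lia | apply lt_IZR; simpl; nra]).
  unfold cnt; apply Rle_antisym.
  - eapply Rle_trans.
    + apply (window_le _ IZR (1 - up (N * r)) (up (N * r) - 1) M); try lia; intros i Hi.
      * rewrite indic_T by (apply Hw; auto); rewrite minus_IZR; simpl; lra.
      * rewrite indic_F by (rewrite Hw; auto); lra.
    + rewrite !minus_IZR; simpl; lra.
  - eapply Rle_trans.
    2: apply (window_ge _ IZR (1 - up (N * r)) (up (N * r) - 1) M); try lia; intros i Hi.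
    + rewrite !minus_IZR; simpl; lra.
    + rewrite indic_T by (apply Hw; auto); rewrite minus_IZR; simpl; lra.
    + rewrite indic_F by (rewrite Hw; auto); lra.
Qed.

(* The closed cube [-5a/24, 5a/24]^3 and the half-open pyramid over its face
   x = 5a/24 (the base itself belongs to the cube). *)
Definition cube_pt (a x y z : R) : Prop :=
  - (5 * a / 24) <= x <= 5 * a / 24 /\ - (5 * a / 24) <= y <= 5 * a / 24 /\
  - (5 * a / 24) <= z <= 5 * a / 24.

Definition pyramid_pt (a x y z : R) : Prop :=
  5 * a / 24 < x <= 5 * a / 16 /\
  - (2 * (5 * a / 16 - x)) <= y <= 2 * (5 * a / 16 - x) /\
  - (2 * (5 * a / 16 - x)) <= z <= 2 * (5 * a / 16 - x).

(* The split of pair_bounds_split with half-open pyramids, making the seven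
   pieces pairwise disjoint. *)
Lemma pair_bounds_union a x y z : 0 < a ->
  pair_bounds a (mkpt x y z) <->
  cube_pt a x y z \/ pyramid_pt a x y z \/ pyramid_pt a (- x) y z \/ pyramid_pt a y x z \/
  pyramid_pt a (- y) x z \/ pyramid_pt a z y x \/ pyramid_pt a (- z) y x.
Proof.
  intros ha; unfold pair_bounds, cube_pt, pyramid_pt; ptsimpl; split.
  - intros Hx.
    destruct (Rle_dec (Rabs x) (5 * a / 24)) as [A1|A1];
    [destruct (Rle_dec (Rabs y) (5 * a / 24)) as [A2|A2];
     [destruct (Rle_dec (Rabs z) (5 * a / 24)) as [A3|A3]|]|].
    + left; abs_cases; repeat split; lra.
    + destruct (Rle_dec 0 z); [do 5 right; left | do 6 right]; abs_cases; repeat split; lra.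
    + destruct (Rle_dec 0 y); [do 3 right; left | do 4 right; left]; abs_cases; repeat split; lra.
    + destruct (Rle_dec 0 x); [do 1 right; left | do 2 right; left]; abs_cases; repeat split; lra.
  - intros H; repeat split; abs_cases; lra.
Qed.

Lemma indic_tetrakis a x y z : 0 < a ->
  indic (conv (tetrakis a) (mkpt x y z)) =
  indic (cube_pt a x y z) + (indic (pyramid_pt a x y z) + (indic (pyramid_pt a (- x) y z) +
  (indic (pyramid_pt a y x z) + (indic (pyramid_pt a (- y) x z) +
  (indic (pyramid_pt a z y x) + indic (pyramid_pt a (- z) y x)))))).
Proof.
  intros ha.
  rewrite (indic_iff _ _ (tetrakis_pair_bounds a (mkpt x y z) ha)),
          (indic_iff _ _ (pair_bounds_union a x y z ha)).
  unfold cube_pt, pyramid_pt;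
  repeat rewrite indic_or; try reflexivity; intros [H1 H2];
  repeat match goal with H : _ \/ _ |- _ => destruct H end; lra.
Qed.

Definition lattice_sum (M : nat) (N : R) (g : R -> R -> R -> R) : R :=
  sumR (map (fun i => sumR (map (fun j => sumR (map (fun k =>
    g (IZR i / N) (IZR j / N) (IZR k / N)) (zrange M))) (zrange M))) (zrange M)).

Lemma lattice_vol_sum S n :
  lattice_vol S n = / INR (Datatypes.S n) ^ 3 *
    lattice_sum (Datatypes.S n * Datatypes.S n) (INR (Datatypes.S n)) (fun x y z => indic (S (mkpt x y z))).
Proof. reflexivity. Qed.

Lemma lattice_sum_ext M N g h :
  (forall x y z, g x y z = h x y z) -> lattice_sum M N g = lattice_sum M N h.
Proof.
  intros H; unfold lattice_sum.
  apply sum_ext; intros i _; apply sum_ext; intros j _; apply sum_ext; intros k _; apply H.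
Qed.

Lemma lattice_sum_add M N g h :
  lattice_sum M N (fun x y z => g x y z + h x y z) = lattice_sum M N g + lattice_sum M N h.
Proof.
  unfold lattice_sum; rewrite <- sum_add; apply sum_ext; intros i _.
  rewrite <- sum_add; apply sum_ext; intros j _; apply sum_add.
Qed.

Lemma lattice_sum_swap12 M N g :
  lattice_sum M N g = lattice_sum M N (fun x y z => g y x z).
Proof. apply sum_swap. Qed.

Lemma lattice_sum_swap23 M N g :
  lattice_sum M N g = lattice_sum M N (fun x y z => g x z y).
Proof. unfold lattice_sum; apply sum_ext; intros i _; apply sum_swap. Qed.

Lemma lattice_sum_swap13 M N g :
  lattice_sum M N g = lattice_sum M N (fun x y z => g z y x).
Proof.
  rewrite lattice_sum_swap23, lattice_sum_swap12, lattice_sum_swap23; reflexivity.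
Qed.

Lemma lattice_sum_neg1 M N g : 0 < N ->
  lattice_sum M N g = lattice_sum M N (fun x y z => g (- x) y z).
Proof.
  intros hN; unfold lattice_sum; rewrite sum_neg; apply sum_ext; intros i _.
  replace (IZR (- i) / N) with (- (IZR i / N)) by (rewrite opp_IZR; field; lra); reflexivity.
Qed.

Lemma lattice_sum_tetrakis a N M : 0 < a -> 0 < N ->
  lattice_sum M N (fun x y z => indic (conv (tetrakis a) (mkpt x y z))) =
  lattice_sum M N (fun x y z => indic (cube_pt a x y z)) +
  6 * lattice_sum M N (fun x y z => indic (pyramid_pt a x y z)).
Proof.
  intros ha hN; set (P := fun x y z => indic (pyramid_pt a x y z)).
  rewrite (lattice_sum_ext _ _ _ _ (fun x y z => indic_tetrakis a x y z ha)), !lattice_sum_add.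
  assert (E1 : lattice_sum M N (fun x y z => P (- x) y z) = lattice_sum M N P)
    by (symmetry; apply lattice_sum_neg1; exact hN).
  assert (E2 : lattice_sum M N (fun x y z => P y x z) = lattice_sum M N P)
    by (symmetry; apply lattice_sum_swap12).
  assert (E3 : lattice_sum M N (fun x y z => P (- y) x z) = lattice_sum M N P).
  { rewrite <- E1; symmetry; apply (lattice_sum_swap12 M N (fun x y z => P (- x) y z)). }
  assert (E4 : lattice_sum M N (fun x y z => P z y x) = lattice_sum M N P)
    by (symmetry; apply lattice_sum_swap13).
  assert (E5 : lattice_sum M N (fun x y z => P (- z) y x) = lattice_sum M N P).
  { rewrite <- E1; symmetry; apply (lattice_sum_swap13 M N (fun x y z => P (- x) y z)). }
  unfold P in *; rewrite E1, E2, E3, E4, E5; ring.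
Qed.

Lemma lattice_sum_cube a N M :
  lattice_sum M N (fun x y z => indic (cube_pt a x y z)) =
  cnt N (5 * a / 24) M * (cnt N (5 * a / 24) M * cnt N (5 * a / 24) M).
Proof.
  set (C := cnt N (5 * a / 24) M).
  transitivity (sumR (map (fun i => (C * C) * indic (- (5 * a / 24) <= IZR i / N <= 5 * a / 24))
                          (zrange M))).
  - unfold lattice_sum, cube_pt; apply sum_ext; intros i _.
    rewrite (Rmult_comm (C * C)); unfold C, cnt; rewrite <- sum_prod2.
    apply sum_ext; intros j _; apply sum_ext; intros k _; rewrite !indic_and; reflexivity.
  - rewrite sum_scal; unfold C, cnt; ring.
Qed.

(* The pyramid count, slice by slice: the slice at x = i / N is a square. *)
Definition pyramid_count (a N : R) (M : nat) : R :=
  sumR (map (fun i => indic (5 * a / 24 < IZR i / N <= 5 * a / 16) *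
    (cnt N (2 * (5 * a / 16 - IZR i / N)) M * cnt N (2 * (5 * a / 16 - IZR i / N)) M)) (zrange M)).

Lemma lattice_sum_pyramid a N M :
  lattice_sum M N (fun x y z => indic (pyramid_pt a x y z)) = pyramid_count a N M.
Proof.
  unfold lattice_sum, pyramid_count, pyramid_pt; apply sum_ext; intros i _.
  unfold cnt; rewrite <- sum_prod2.
  apply sum_ext; intros j _; apply sum_ext; intros k _; rewrite !indic_and; reflexivity.
Qed.

Lemma pyramid_window a N i : 0 < N ->
  5 * a / 24 < IZR i / N <= 5 * a / 16 <->
  (up (N * (5 * a / 24)) <= i <= up (N * (5 * a / 16)) - 1)%Z.
Proof. intros hN; rewrite <- int_gt, <- int_le, lt_div, le_div by exact hN; tauto. Qed.

Lemma slice_count a N M i : 0 < a -> 0 < N -> N * a <= INR M ->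
  5 * a / 24 < IZR i / N <= 5 * a / 16 ->
  let u := N * (5 * a / 16) - IZR i in
  0 <= u /\ 4 * u - 1 < cnt N (2 * (5 * a / 16 - IZR i / N)) M <= 4 * u + 1 /\
  1 <= cnt N (2 * (5 * a / 16 - IZR i / N)) M.
Proof.
  intros ha hN hM [H1 H2] u.
  pose proof H2 as H2'; rewrite lt_div in H1 by lra; rewrite le_div in H2 by lra.
  assert (Er : N * (2 * (5 * a / 16 - IZR i / N)) = 2 * u) by (unfold u; field; lra).
  rewrite cnt_val by (try rewrite Er; unfold u in *; lra).
  rewrite Er; destruct (up_spec (2 * u)) as [U1 U2].
  assert (Hup : (0 < up (2 * u))%Z) by (apply lt_IZR; simpl; unfold u in *; lra).
  assert (1 <= IZR (up (2 * u))) by (apply IZR_le; lia).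
  unfold u in *; repeat split; lra.
Qed.

(* Discrete primitives for the squared slice counts: prim_up u - prim_up (u + 1)
   = 16u^2 + 8u + 4/3 and prim_lo u - prim_lo (u + 1) = 16u^2 - 8u - 20/3 bracket
   the square of any count C >= 1 with 4u - 1 < C <= 4u + 1. *)
Definition prim_up (u : R) : R := - (16 / 3) * (u * u * u) + 4 * (u * u).
Definition prim_lo (u : R) : R := - (16 / 3) * (u * u * u) + 12 * (u * u).

Lemma pyramid_window_range a N M : 0 < a -> 0 < N -> N * a <= INR M ->
  (- Z.of_nat M <= up (N * (5 * a / 24)))%Z /\
  (up (N * (5 * a / 16)) - 1 <= Z.of_nat M)%Z /\
  (up (N * (5 * a / 24)) - 1 <= up (N * (5 * a / 16)) - 1)%Z.
Proof.
  intros ha hN hM.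
  destruct (up_spec (N * (5 * a / 24))) as [P1 P2]; destruct (up_spec (N * (5 * a / 16))) as [Q1 Q2].
  assert (Hd : N * (5 * a / 16) <= N * a) by (apply Rmult_le_compat_l; lra).
  assert (Hcd : N * (5 * a / 24) < N * (5 * a / 16)) by (apply Rmult_lt_compat_l; lra).
  repeat split.
  - cut (0 < up (N * (5 * a / 24)))%Z; [lia | apply lt_IZR; simpl; nra].
  - apply le_IZR; rewrite minus_IZR, <- INR_IZR_INZ; simpl; lra.
  - destruct (Z_le_dec (up (N * (5 * a / 24))) (up (N * (5 * a / 16)))) as [|Hn]; [lia|].
    assert (HH : (up (N * (5 * a / 16)) <= up (N * (5 * a / 24)) - 1)%Z) by lia.
    apply IZR_le in HH; rewrite minus_IZR in HH; simpl in HH; lra.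
Qed.

Lemma pyramid_count_bounds a N M : 0 < a -> 0 < N -> N * a <= INR M ->
  let p := up (N * (5 * a / 24)) in
  let q := (up (N * (5 * a / 16)) - 1)%Z in
  prim_lo (N * (5 * a / 16) - IZR q) - prim_lo (N * (5 * a / 16) - IZR (p - 1)) <=
  pyramid_count a N M <=
  prim_up (N * (5 * a / 16) - IZR q) - prim_up (N * (5 * a / 16) - IZR (p - 1)).
Proof.
  intros ha hN hM p q.
  destruct (pyramid_window_range a N M ha hN hM) as [Hp [Hq Hpq]].
  assert (Hsq : forall i, 0 <= cnt N (2 * (5 * a / 16 - IZR i / N)) M *
                               cnt N (2 * (5 * a / 16 - IZR i / N)) M) by (intros; nra).
  assert (Eu : forall i, N * (5 * a / 16) - IZR (i - 1) = (N * (5 * a / 16) - IZR i) + 1)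
    by (intros; rewrite minus_IZR; simpl; ring).
  unfold pyramid_count; split.
  - apply (window_ge _ (fun i => prim_lo (N * (5 * a / 16) - IZR i)) p q M); auto.
    + intros i Hi; apply (pyramid_window a N i hN) in Hi as Hs.
      destruct (slice_count a N M i ha hN hM Hs) as [hu [[c1 c2] c3]].
      rewrite indic_T by exact Hs; cbv beta; rewrite Eu; unfold prim_lo.
      set (C := cnt N (2 * (5 * a / 16 - IZR i / N)) M) in *.
      set (u := N * (5 * a / 16) - IZR i) in *.
      assert (C * C >= 16 * (u * u) - 8 * u - 20 / 3) by (destruct (Rle_dec 0 (4 * u - 1)); nra).
      nra.
    + intros i Hi; rewrite indic_F by (rewrite pyramid_window; auto); specialize (Hsq i); lra.
  - apply (window_le _ (fun i => prim_up (N * (5 * a / 16) - IZR i)) p q M); auto.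
    + intros i Hi; apply (pyramid_window a N i hN) in Hi as Hs.
      destruct (slice_count a N M i ha hN hM Hs) as [hu [[c1 c2] c3]].
      rewrite indic_T by exact Hs; cbv beta; rewrite Eu; unfold prim_up.
      set (C := cnt N (2 * (5 * a / 16 - IZR i / N)) M) in *.
      set (u := N * (5 * a / 16) - IZR i) in *.
      assert (C * C <= 16 * (u * u) + 8 * u + 1) by nra.
      nra.
    + intros i Hi; rewrite indic_F by (rewrite pyramid_window; auto); lra.
Qed.

Lemma pyramid_count_estimate a N M : 0 < a -> 0 < N -> N * a <= INR M ->
  Rabs (pyramid_count a N M - 16 / 3 * (N * (5 * a / 48)) ^ 3) <= 16 * (N * (5 * a / 48) + 1) ^ 2 + 6.
Proof.
  intros ha hN hM; pose proof (pyramid_count_bounds a N M ha hN hM) as [Lo Up]; cbv zeta in Lo, Up.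
  destruct (up_spec (N * (5 * a / 24))) as [P1 P2]; destruct (up_spec (N * (5 * a / 16))) as [Q1 Q2].
  rewrite !minus_IZR in Lo, Up; simpl in Lo, Up.
  set (v := N * (5 * a / 16) - (IZR (up (N * (5 * a / 16))) - 1)) in *.
  set (U := N * (5 * a / 16) - (IZR (up (N * (5 * a / 24))) - 1)) in *.
  set (E := N * (5 * a / 48)).
  assert (hv : 0 <= v < 1) by (unfold v; lra).
  assert (hE : 0 <= E) by (unfold E; nra).
  assert (hU : E <= U <= E + 1) by (unfold U, E; lra).
  unfold prim_lo, prim_up in *.
  assert (0 <= v ^ 2 <= 1) by (split; [apply pow2_ge_0 | nra]).
  assert (0 <= v ^ 3 <= 1) by (split; [apply pow_le | replace 1 with (1 ^ 3) by ring; apply pow_incr]; lra).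
  assert (E ^ 3 <= U ^ 3 <= (E + 1) ^ 3) by (split; apply pow_incr; lra).
  assert (0 <= U ^ 2 <= (E + 1) ^ 2) by (split; [apply pow2_ge_0 | apply pow_incr; lra]).
  apply Rabs_le; split; nra.
Qed.

Lemma cube_diff_bound C y : 0 <= y -> y - 1 <= C <= y + 1 -> 0 <= C ->
  Rabs (C ^ 3 - y ^ 3) <= 3 * y ^ 2 + 3 * y + 1.
Proof.
  intros hy hC hC0.
  assert (HD : 0 <= C * C + C * y + y * y <= 3 * y ^ 2 + 3 * y + 1) by (split; nra).
  replace (C ^ 3 - y ^ 3) with ((C - y) * (C * C + C * y + y * y)) by ring.
  rewrite Rabs_mult, (Rabs_right (C * C + C * y + y * y)) by lra.
  assert (Rabs (C - y) <= 1) by (apply Rabs_le; lra).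
  pose proof (Rabs_pos (C - y)); nra.
Qed.

Lemma cube_count_estimate a N M : 0 < a -> 0 < N -> N * a <= INR M ->
  Rabs (cnt N (5 * a / 24) M ^ 3 - (2 * (N * (5 * a / 24))) ^ 3) <=
  12 * (N * (5 * a / 24)) ^ 2 + 6 * (N * (5 * a / 24)) + 1.
Proof.
  intros ha hN hM.
  assert (hc : 0 <= N * (5 * a / 24)) by nra.
  rewrite cnt_val by nra; destruct (up_spec (N * (5 * a / 24))) as [U1 U2].
  assert (1 <= IZR (up (N * (5 * a / 24)))).
  { apply IZR_le; cut (0 < up (N * (5 * a / 24)))%Z; [lia | apply lt_IZR; simpl; lra]. }
  eapply Rle_trans; [apply cube_diff_bound; lra | lra].
Qed.

Lemma lattice_count_estimate a N M : 0 < a -> 1 <= N -> N * a <= INR M ->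
  let K := 12 * (5 * a / 24) ^ 2 + 6 * (5 * a / 24) + 37 + 96 * (5 * a / 48 + 1) ^ 2 in
  Rabs (lattice_sum M N (fun x y z => indic (conv (tetrakis a) (mkpt x y z))) -
        125 / 1152 * a ^ 3 * N ^ 3) <= K * N ^ 2.
Proof.
  intros ha hN hM K.
  rewrite lattice_sum_tetrakis, lattice_sum_cube, lattice_sum_pyramid by lra.
  pose proof (cube_count_estimate a N M ha ltac:(lra) hM) as HC.
  pose proof (pyramid_count_estimate a N M ha ltac:(lra) hM) as HP.
  set (C := cnt N (5 * a / 24) M) in *; set (P := pyramid_count a N M) in *.
  replace (C * (C * C) + 6 * P - 125 / 1152 * a ^ 3 * N ^ 3)
    with ((C ^ 3 - (2 * (N * (5 * a / 24))) ^ 3) + 6 * (P - 16 / 3 * (N * (5 * a / 48)) ^ 3))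
    by field.
  eapply Rle_trans; [apply Rabs_triang|]; rewrite Rabs_mult, (Rabs_right 6) by lra.
  assert (HN2 : N <= N ^ 2) by nra.
  assert (N * (5 * a / 24) <= 5 * a / 24 * N ^ 2)
    by (rewrite Rmult_comm; apply Rmult_le_compat_l; lra).
  assert ((N * (5 * a / 48) + 1) ^ 2 <= (5 * a / 48 + 1) ^ 2 * N ^ 2).
  { rewrite <- Rpow_mult_distr; apply pow_incr; split; nra. }
  unfold K; nra.
Qed.

Theorem tetrakis_volume a : 0 < a -> has_volume (conv (tetrakis a)) (125 / 1152 * a ^ 3).
Proof.
  intros ha eps Heps.
  set (K := 12 * (5 * a / 24) ^ 2 + 6 * (5 * a / 24) + 37 + 96 * (5 * a / 48 + 1) ^ 2).
  assert (hK : 0 <= K) by (unfold K; nra).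
  assert (hKe : 0 <= K / eps)
    by (unfold Rdiv; apply Rmult_le_pos; [lra | left; apply Rinv_0_lt_compat; lra]).
  destruct (up_spec (K / eps + a)) as [U1 U2].
  exists (Z.to_nat (up (K / eps + a))); intros n Hn; unfold R_dist.
  rewrite lattice_vol_sum; set (N := INR (Datatypes.S n)).
  assert (hN1 : 1 <= N) by (unfold N; rewrite S_INR; pose proof (pos_INR n); lra).
  assert (hNx : K / eps + a < N).
  { apply le_INR in Hn; rewrite INR_IZR_INZ, Z2Nat.id in Hn by (apply le_IZR; simpl; lra).
    unfold N; rewrite S_INR; lra. }
  assert (hM : N * a <= INR (Datatypes.S n * Datatypes.S n)) by (rewrite mult_INR; fold N; nra).
  pose proof (lattice_count_estimate a N _ ha hN1 hM) as HT; cbv zeta in HT; fold K in HT.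
  set (T := lattice_sum _ N _) in *.
  assert (N3 : 0 < N ^ 3) by (apply pow_lt; lra).
  replace (/ N ^ 3 * T - 125 / 1152 * a ^ 3)
    with ((T - 125 / 1152 * a ^ 3 * N ^ 3) * / N ^ 3) by (field; lra).
  rewrite Rabs_mult, (Rabs_right (/ N ^ 3)) by (left; apply Rinv_0_lt_compat; lra).
  apply Rle_lt_trans with (K * N ^ 2 * / N ^ 3);
    [apply Rmult_le_compat_r; [left; apply Rinv_0_lt_compat |]; lra|].
  replace (K * N ^ 2 * / N ^ 3) with (K / N) by (field; lra).
  apply Rlt_le_trans with eps; [|lra].
  apply (Rmult_lt_reg_l N); [lra|].
  replace (N * (K / N)) with K by (field; lra).
  replace K with (eps * (K / eps)) at 1 by (field; lra).
  nra.
Qed.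

Theorem mainTheorem3 (a : R) (ha : 0 < a) :
  (* Voronoi cell of the origin w.r.t. L2 is the tetrakis hexahedron *)
  (forall x : pt, voronoi (L2 a) origin x <-> conv (tetrakis a) x) /\
  (* it is the cube [-5a/24,5a/24]^3 with a pyramid of height 5a/48 on each face *)
  (forall x : pt, conv (tetrakis a) x <->
     (in_cube (5*a/24) x \/
      exists F, In F (pyramids (5*a/24) (5*a/48)) /\ conv F x)) /\
  (* its volume is 125/1152 a^3 *)
  has_volume (conv (tetrakis a)) (125/1152 * a ^ 3) /\
  (* same, after translation, for every point of aZ^3 ∪ a(Z+1/2)^3 *)
  (forall p : pt, inZ3 a p \/ inZh3 a p ->
     forall x : pt, voronoi (L2 a) p x <-> conv (tetrakis a) (psub x p)).
Proof.
  split; [intros x; apply voronoi_origin_tetrakis; exact ha|].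
  split; [intros x; apply tetrakis_cube_pyramids; exact ha|].
  split; [apply tetrakis_volume; exact ha|].
  intros p Hp; apply voronoi_center_tetrakis; assumption.
Qed.
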